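(* Let $R\subset S$ be an integral FCP ring extension. Then $R\subset S$ has a critical ideal if and only if $R\subset S$ is $M$-crucial for some $M\in\mathrm{Max}(R)$. In this case $M$ is the critical ideal of the extension and $M=\sqrt{(R:R[x])}$ for each $x\in S\setminus R$.
   Context: Rings are commutative and unital. An extension $R\subseteq S$ is FCP if every chain in the poset of $R$-subalgebras of $S$ is finite. $(R:T)=\{r\in R\mid rT\subseteq R\}$ for $T\supseteq R$, and $R:x=\{r\in R\mid rx\in R\}$. An ideal $J$ of $R$ is a critical ideal of $R\subset S$ if $J=\sqrt{R:x}$ for every $x\in S\setminus R$. $R\subset S$ is $M$-crucial if $\mathrm{Supp}_R(S/R)=\{P\in\mathrm{Spec}(R)\mid R_P\neq S_P\}=\{M\}$. *)

(* A ring extension R ⊆ S is modelled as a commutative ring S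
   together with a subring R of S, given as a predicate on S. *)
From Stdlib Require List.
From mathcomp Require Import all_boot all_algebra.
Set Implicit Arguments. Unset Strict Implicit. Unset Printing Implicit Defensive.
Import GRing.Theory.
Local Open Scope ring_scope.

Section Defs.
Variable S : comNzRingType.
Implicit Types (R T P J M I : S -> Prop).

Definition is_subring T : Prop :=
  T 1 /\ (forall x y, T x -> T y -> T (x - y)) /\ (forall x y, T x -> T y -> T (x * y)).

Definition subalgebra R T : Prop := is_subring T /\ (forall x, R x -> T x).

Definition is_chain R (C : (S -> Prop) -> Prop) : Prop :=
  (forall T, C T -> subalgebra R T) /\
  (forall T1 T2, C T1 -> C T2 -> (forall x, T1 x -> T2 x) \/ (forall x, T2 x -> T1 x)).
Definition finite_family (C : (S -> Prop) -> Prop) : Prop :=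
  exists l : seq (S -> Prop), forall T, C T -> exists2 T', List.In T' l & forall x, T x <-> T' x.
Definition FCP R : Prop := forall C, is_chain R C -> finite_family C.

Definition integral_over R (s : S) : Prop :=
  exists (n : nat) (c : nat -> S), (forall i, R (c i)) /\
    s ^+ n + \sum_(i < n) c i * s ^+ i = 0.
Definition integral_ext R : Prop := forall s, integral_over R s.

Definition ideal_of R I : Prop :=
  (forall x, I x -> R x) /\ I 0 /\ (forall x y, I x -> I y -> I (x + y)) /\
  (forall r x, R r -> I x -> I (r * x)).
Definition prime_of R P : Prop :=
  ideal_of R P /\ ~ P 1 /\ (forall x y, R x -> R y -> P (x * y) -> P x \/ P y).
Definition maximal_of R M : Prop :=
  ideal_of R M /\ ~ M 1 /\
  (forall I, ideal_of R I -> (forall x, M x -> I x) -> I 1 \/ (forall x, I x <-> M x)).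

Definition colonR R (x : S) : S -> Prop := fun r => R r /\ R (r * x).
Definition conductorR R T : S -> Prop := fun r => R r /\ forall y, T y -> R (r * y).
Definition radR R I : S -> Prop := fun r => R r /\ exists n : nat, I (r ^+ n).
Definition adjoinR R (x : S) : S -> Prop :=
  fun y => exists (n : nat) (c : nat -> S), (forall i, R (c i)) /\ y = \sum_(i < n) c i * x ^+ i.

Definition critical_ideal R J : Prop :=
  ideal_of R J /\ forall x, ~ R x -> forall r, J r <-> radR R (colonR R x) r.

(* P ∈ Supp_R(S/R), i.e. R_P ≠ S_P, i.e. (S/R)_P ≠ 0:
   some s ∈ S is not killed in (S/R)_P by any t ∈ R \ P *)
Definition in_supp R P : Prop :=
  prime_of R P /\ exists s : S, forall t, R t -> ~ P t -> ~ R (t * s).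
Definition crucial R M : Prop :=
  forall P, in_supp R P <-> (prime_of R P /\ forall x, P x <-> M x).

End Defs.

(* If M is the only point of Supp(S/R), then every prime containing R : x (x not in R) lies
   in the support, so rad(R : x) = M; as x is integral, R[x] is spanned by finitely many
   powers of x, and a common power of any r in M carries them into R, whence
   M = rad(R : R[x]).
   Conversely, let J be critical and r in R \ J. The R-algebras R + r^n R[x] decrease, hence
   stabilise by FCP, and the determinant trick yields t with (1 - r t) r^n x in R. Since
   r^n x is not in R (r is not in J = rad(R : x)), 1 - r t lies in rad(R : r^n x) = J.
   So J is maximal; and a prime P of the support, witnessed by s, contains rad(R : s) = J,
   hence equals J. *)

From Stdlib Require List.
From Stdlib Require Import Classical.
From mathcomp Require Import all_boot all_algebra.
From mathcomp Require Import ring zify.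
From mathcomp Require classical_sets.
Set Implicit Arguments. Unset Strict Implicit. Unset Printing Implicit Defensive.
Import GRing.Theory.
Local Open Scope ring_scope.

Section Subring.
Variables (S : comNzRingType) (R : S -> Prop).
Hypothesis HR : is_subring R.

Lemma subring1 : R 1. Proof. by case: HR. Qed.

Lemma subringB x y : R x -> R y -> R (x - y). Proof. by case: HR => _ [RB _]; apply: RB. Qed.

Lemma subringM x y : R x -> R y -> R (x * y). Proof. by case: HR => _ [_ RM]; apply: RM. Qed.

Lemma subring0 : R 0. Proof. by rewrite -(subrr 1); apply: subringB; apply: subring1. Qed.

Lemma subringN x : R x -> R (- x).
Proof. by rewrite -sub0r; apply: subringB; apply: subring0. Qed.

Lemma subringD x y : R x -> R y -> R (x + y).
Proof. by move=> Rx Ry; rewrite -(opprK y); apply: subringB => //; apply: subringN. Qed.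

Lemma subringX x n : R x -> R (x ^+ n).
Proof.
move=> Rx; elim: n => [|n IHn]; first by rewrite expr0; apply: subring1.
by rewrite exprS; apply: subringM.
Qed.

Lemma subring_sum n (F : 'I_n -> S) : (forall i, R (F i)) -> R (\sum_(i < n) F i).
Proof. by move=> RF; apply: (big_ind R) => //; [apply: subring0 | apply: subringD]. Qed.

Lemma subring_1B_mul r t : R r -> R t -> R (1 - r * t).
Proof. by move=> Rr Rt; apply: subringB; [apply: subring1 | apply: subringM]. Qed.

Definition submodule (B : S -> Prop) : Prop :=
  B 0 /\ (forall u v, B u -> B v -> B (u + v)) /\ (forall c u, R c -> B u -> B (c * u)).

Lemma submodule_sum B n (F : 'I_n -> S) :
  submodule B -> (forall i, B (F i)) -> B (\sum_(i < n) F i).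
Proof. by case=> B0 [BD _] BF; apply: (big_ind B). Qed.

Lemma submodule_subring : submodule R.
Proof. split; [exact: subring0 | split; [exact: subringD | exact: subringM]]. Qed.

Lemma submodule_one_of_inverse_mod J I a t : submodule I -> (forall z, J z -> I z) ->
  I a -> R t -> J (1 - a * t) -> I 1.
Proof.
move=> [_ [ID IZ]] JI Ia Rt Jat.
by rewrite (_ : 1 = (1 - a * t) + t * a); [apply: ID; [apply: JI | apply: IZ] | ring].
Qed.

Definition add_line (B : S -> Prop) (g : S) : S -> Prop :=
  fun z => exists b c, B b /\ R c /\ z = b + c * g.

Lemma add_line_l B g b : B b -> add_line B g b.
Proof. by exists b, 0; split; [|split; [apply: subring0 | rewrite mul0r addr0]]. Qed.

Lemma add_line_r B g : submodule B -> add_line B g g.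
Proof. by case=> B0 _; exists 0, 1; split; [|split; [apply: subring1 | rewrite mul1r add0r]]. Qed.

Lemma submodule_add_line B g : submodule B -> submodule (add_line B g).
Proof.
case=> B0 [BD BM]; split; first exact: add_line_l.
split.
  move=> _ _ [b [c [Bb [Rc ->]]]] [b' [c' [Bb' [Rc' ->]]]].
  exists (b + b'), (c + c'); split; [exact: BD | split; [exact: subringD | ring]].
move=> a _ Ra [b [c [Bb [Rc ->]]]].
by exists (a * b), (a * c); split; [exact: BM | split; [exact: subringM | ring]].
Qed.

End Subring.

Section PowerSpan.
Variables (S : comNzRingType) (R : S -> Prop).
Hypothesis HR : is_subring R.

Definition pow_span (d : nat) (x z : S) : Prop :=
  exists e : nat -> S, (forall j, R (e j)) /\ z = \sum_(j < d) e j * x ^+ j.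

Variables (d : nat) (x : S).

Lemma submodule_pow_span : submodule R (pow_span d x).
Proof.
split.
  exists (fun _ => 0); split=> [j|]; first exact: subring0.
  by rewrite big1 // => j _; rewrite mul0r.
split.
  move=> _ _ [e [Re ->]] [f [Rf ->]]; exists (fun j => e j + f j); split.
    by move=> j; apply: subringD.
  by rewrite -big_split; apply: eq_bigr => j _; rewrite mulrDl.
move=> a _ Ra [e [Re ->]]; exists (fun j => a * e j); split.
  by move=> j; apply: subringM.
by rewrite mulr_sumr; apply: eq_bigr => j _; rewrite mulrA.
Qed.

Lemma pow_spanD u v : pow_span d x u -> pow_span d x v -> pow_span d x (u + v).
Proof. by have [_ [spanD _]] := submodule_pow_span; apply: spanD. Qed.

Lemma pow_spanZ a u : R a -> pow_span d x u -> pow_span d x (a * u).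
Proof. by have [_ [_ spanZ]] := submodule_pow_span; apply: spanZ. Qed.

Lemma pow_spanB u v : pow_span d x u -> pow_span d x v -> pow_span d x (u - v).
Proof.
move=> su sv; apply: pow_spanD su _; rewrite -mulN1r.
by apply: pow_spanZ sv; apply: subringN => //; apply: subring1.
Qed.

Lemma pow_span_small m : (m < d)%N -> pow_span d x (x ^+ m).
Proof.
move=> lt_md; exists (fun j => if j == m then 1 else 0); split.
  by move=> j; case: eqP => _; [apply: subring1 | apply: subring0].
rewrite (bigD1 (Ordinal lt_md)) //= eqxx mul1r big1 ?addr0 // => j.
by rewrite -val_eqE /= => /negbTE ->; rewrite mul0r.
Qed.

Lemma mul_pow_span u z :
  (forall i, (i < d)%N -> R (u * x ^+ i)) -> pow_span d x z -> R (u * z).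
Proof.
move=> Rux [e [Re ->]]; rewrite mulr_sumr; apply: subring_sum => // i.
by rewrite mulrCA; apply: subringM => //; apply: Rux.
Qed.

Variable c : nat -> S.
Hypothesis Rc : forall i, R (c i).
Hypothesis monic_root : x ^+ d + \sum_(i < d) c i * x ^+ i = 0.

Lemma pow_span_pow m : pow_span d x (x ^+ m).
Proof.
elim/ltn_ind: m => m IHm.
have [lt_md | le_dm] := ltnP m d; first exact: pow_span_small.
have -> : x ^+ m = - \sum_(i < d) c i * x ^+ (m - d + i).
  rewrite -{1}(subnK le_dm) exprD.
  have -> : x ^+ d = - \sum_(i < d) c i * x ^+ i.
    by apply/eqP; rewrite -subr_eq0 opprK monic_root.
  by rewrite mulrN mulr_sumr; congr (- _); apply: eq_bigr => i _; rewrite exprD; ring.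
rewrite -mulN1r; apply: pow_spanZ; first by apply: subringN => //; apply: subring1.
apply: submodule_sum submodule_pow_span _ => i; apply: pow_spanZ => //; apply: IHm.
by have := ltn_ord i; lia.
Qed.


Lemma pow_spanM u v : pow_span d x u -> pow_span d x v -> pow_span d x (u * v).
Proof.
move=> [e [Re ->]] [f [Rf ->]]; rewrite mulr_suml.
apply: submodule_sum submodule_pow_span _ => i; rewrite mulr_sumr.
apply: submodule_sum submodule_pow_span _ => j; rewrite mulrACA -exprD.
by apply: pow_spanZ; [apply: subringM | apply: pow_span_pow].
Qed.

Lemma adjoin_pow_span y : adjoinR R x y -> pow_span d x y.
Proof.
move=> [n [e [Re ->]]]; apply: submodule_sum submodule_pow_span _ => i.
by apply: pow_spanZ => //; apply: pow_span_pow.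
Qed.

End PowerSpan.

Section Nakayama.
Variables (S : comNzRingType) (R : S -> Prop).
Hypothesis HR : is_subring R.
Variable r : S.
Hypothesis Rr : R r.

Definition add_rspan (B : S -> Prop) (k : nat) (g : nat -> S) (z : S) : Prop :=
  exists b (e : nat -> S), B b /\ (forall j, R (e j)) /\ z = b + r * \sum_(j < k) e j * g j.

(* After the first k generators are killed modulo B + R g_k, the relation for g_k reads
   (1 - r w) g_k \in B. *)
Lemma nakayama_step B k (g : nat -> S) t :
  submodule R B -> R t -> add_rspan B k.+1 g (g k) ->
  (forall i, (i < k)%N -> add_line R B (g k) ((1 - r * t) * g i)) ->
  exists2 t', R t' & forall i, (i < k.+1)%N -> B ((1 - r * t') * g i).
Proof.
move=> subB Rt [b [e [Bb [Re gkE]]]] tg.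
have [_ [BD BZ]] := subB.
have [b' [c' [Bb' [Rc' sumE]]]] :
    add_line R B (g k) (\sum_(j < k) e j * ((1 - r * t) * g j)).
  apply: submodule_sum (submodule_add_line HR _ _) _ => // j.
  by have [_ [_ lineZ]] := submodule_add_line HR (g k) subB; apply: lineZ; last apply: tg.
have {}sumE : (1 - r * t) * \sum_(j < k) e j * g j = b' + c' * g k.
  by rewrite -sumE mulr_sumr; apply: eq_bigr => j _; rewrite mulrCA.
pose w := t + c' + e k * (1 - r * t).
have Rw : R w.
  apply: subringD => //; last by apply: subringM => //; apply: subring_1B_mul.
  exact: subringD.
have Bgk : B ((1 - r * w) * g k).
  suff -> : (1 - r * w) * g k = (1 - r * t) * b + r * b'.
    by apply: BD; apply: BZ => //; apply: subring_1B_mul.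
  rewrite big_ord_recr /= in gkE.
  apply/eqP; rewrite -subr_eq0.
  rewrite (_ : _ - (_ + _) = (1 - r * t) * (g k - (b + r * (\sum_(j < k) e j * g j + e k * g k)))
      + r * ((1 - r * t) * \sum_(j < k) e j * g j - (b' + c' * g k))); last by rewrite /w; ring.
  by rewrite -gkE sumE !subrr !mulr0 addr0.
exists (w + t - r * w * t).
  by apply: subringB (subringD _ _ _) (subringM _ (subringM _ _ _) _).
move=> i; rewrite ltnS leq_eqVlt => /orP [/eqP -> | /tg [bi [ci [Bbi [Rci giE]]]]].
  rewrite (_ : _ * g k = (1 - r * t) * ((1 - r * w) * g k)); last ring.
  by apply: BZ => //; apply: subring_1B_mul.
rewrite (_ : _ * g i = (1 - r * w) * ((1 - r * t) * g i)); last ring.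
rewrite giE (_ : _ * (bi + _) = (1 - r * w) * bi + ci * ((1 - r * w) * g k)); last ring.
by apply: BD; apply: BZ => //; apply: subring_1B_mul.
Qed.

Lemma nakayama_trick B k (g : nat -> S) : submodule R B ->
  (forall i, (i < k)%N -> add_rspan B k g (g i)) ->
  exists2 t, R t & forall i, (i < k)%N -> B ((1 - r * t) * g i).
Proof.
elim: k B => [|k IHk] B subB gE; first by exists 0 => //; apply: subring0.
have [t Rt tg] : exists2 t, R t &
    forall i, (i < k)%N -> add_line R B (g k) ((1 - r * t) * g i).
  apply: IHk (submodule_add_line HR _ subB) _ => i lt_ik.
  have [b [e [Bb [Re ->]]]] := gE i (leqW lt_ik).
  exists (b + r * e k * g k), e; split; last by split => //; rewrite big_ord_recr /=; ring.
  by exists b, (r * e k); split => //; split => //; apply: subringM.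
exact: nakayama_step subB Rt (gE k (ltnSn k)) tg.
Qed.

End Nakayama.

Section PrimeAvoidingPowers.
Variables (S : comNzRingType) (R : S -> Prop).
Hypothesis HR : is_subring R.
Variables (I : S -> Prop) (m : S).
Hypotheses (idealI : ideal_of R I) (I_avoids : forall k, ~ I (m ^+ k)).

(* The last clause holds vacuously for the empty set, the union of the empty chain. *)
Definition avoiding (A : S -> Prop) : Prop :=
  (forall z, A z -> R z) /\ (forall u v, A u -> A v -> A (u + v)) /\
  (forall c u, R c -> A u -> A (c * u)) /\ (forall k, ~ A (m ^+ k)) /\
  ((exists z, A z) -> forall z, I z -> A z).

Lemma avoiding_maximal :
  exists A, avoiding A /\ forall B, classical_sets.proper A B -> ~ avoiding B.
Proof.
apply: classical_sets.Zorn_bigcup => F Favoid Ftot.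
split; [|split; [|split; [|split]]].
- by move=> z [X FX Xz]; have [XR _] := Favoid X FX; apply: XR.
- move=> u v [X FX Xu] [Y FY Yv].
  have [sXY | sYX] := Ftot X Y FX FY.
    by exists Y => //; have [_ [YD _]] := Favoid Y FY; apply: YD => //; apply: sXY.
  by exists X => //; have [_ [XD _]] := Favoid X FX; apply: XD => //; apply: sYX.
- move=> c u Rc [X FX Xu]; exists X => //.
  by have [_ [_ [XZ _]]] := Favoid X FX; apply: XZ.
- by move=> k [X FX Xk]; have [_ [_ [_ [Xm _]]]] := Favoid X FX; apply: Xm Xk.
- move=> [w [X FX Xw]] z Iz; exists X => //.
  by have [_ [_ [_ [_ XI]]]] := Favoid X FX; apply: XI => //; exists w.
Qed.

Lemma maximal_avoiding_ideal : exists A, [/\ ideal_of R A, forall z, I z -> A z,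
  forall k, ~ A (m ^+ k) &
  forall a, R a -> ~ A a -> exists k p c, [/\ A p, R c & m ^+ k = p + c * a]].
Proof.
have [A [[AR [AD [AZ [Am AI]]]] Amax]] := avoiding_maximal.
have [IR subI] := idealI; have [I0 _] := subI.
have IA : forall z, I z -> A z.
  apply: AI; apply: NNPP => A_empty; apply: (Amax I).
    by split=> [z Az | IsubA]; [case: A_empty; exists z | apply: A_empty; exists 0; apply: IsubA].
  by have [_ [ID IZ]] := subI; split=> //; split=> //; split=> //; split.
have subA : submodule R A by split; [exact: IA I0 | split].
exists A; split=> // a Ra Aa.
apply: NNPP => no_power; apply: (Amax (add_line R A a)).
  split=> [z Az | lineA]; first exact: add_line_l.
  by apply: Aa; apply: lineA; apply: add_line_r.
have [_ [lineD lineZ]] := submodule_add_line HR a subA.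
split; [|split; [exact: lineD | split; [exact: lineZ | split]]].
- by move=> _ [p [c [Ap [Rc ->]]]]; apply: subringD => //; [apply: AR | apply: subringM].
- by move=> k [p [c [Ap [Rc mkE]]]]; apply: no_power; exists k, p, c.
- by move=> _ z Iz; apply: (add_line_l HR); exact: IA Iz.
Qed.

Lemma prime_avoiding_powers :
  exists P, [/\ prime_of R P, forall z, I z -> P z & ~ P m].
Proof.
have [A [idealA IA Am A_ext]] := maximal_avoiding_ideal.
have [AR [_ [AD AZ]]] := idealA.
exists A; split=> //; last by rewrite -[m]expr1; apply: Am.
split=> //; split=> [A1 | a b Ra Rb Aab]; first by apply: (Am 0%N); rewrite expr0.
apply: NNPP => /not_or_and [Aa Ab].
have [i [p [c [Ap Rc miE]]]] := A_ext a Ra Aa.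
have [j [q [e [Aq Re mjE]]]] := A_ext b Rb Ab.
apply: (Am (i + j)%N); rewrite exprD miE mjE.
have Rq : R q by apply: AR.
rewrite (_ : _ * _ = (q + e * b) * p + (c * a) * q + (c * e) * (a * b)); last ring.
apply: (AD); first apply: (AD).
- by apply: (AZ) => //; apply: subringD => //; apply: subringM.
- by apply: (AZ) => //; apply: subringM.
- by apply: (AZ) => //; apply: subringM.
Qed.

End PrimeAvoidingPowers.

Section CrucialExtension.
Variables (S : comNzRingType) (R : S -> Prop).
Hypothesis HR : is_subring R.

Lemma colon_ideal x : ideal_of R (colonR R x).
Proof.
split=> [z [] // | ]; split; first by split; [apply: subring0 | rewrite mul0r; apply: subring0].
split=> [u v [Ru Rux] [Rv Rvx] | a u Ra [Ru Rux]]; split.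
- exact: subringD.
- by rewrite mulrDl; apply: subringD.
- exact: subringM.
- by rewrite -mulrA; apply: subringM.
Qed.

Lemma prime_of_pow P a k : prime_of R P -> R a -> P (a ^+ k) -> P a.
Proof.
move=> [_ [P1 Pmul]] Ra; elim: k => [|k IHk]; first by rewrite expr0.
by rewrite exprS => /Pmul[] //; apply: subringX.
Qed.

Lemma in_supp_colon P x :
  prime_of R P -> (forall z, colonR R x z -> P z) -> in_supp R P.
Proof. by move=> primeP colonP; split=> //; exists x => t Rt Pt Rtx; apply/Pt/colonP. Qed.

Lemma crucial_rad_colon M x r :
  crucial R M -> ~ R x -> R r -> M r <-> radR R (colonR R x) r.
Proof.
move=> crucialM Rx Rr; split=> [Mr | [_ [k colon_rk]]].
  split=> //; apply: NNPP => no_power.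
  have [P [primeP colonP Pr]] :=
    prime_avoiding_powers HR (colon_ideal x) (fun k colon_rk => no_power (ex_intro _ k colon_rk)).
  have [_ PM] := (crucialM P).1 (in_supp_colon primeP colonP).
  exact/Pr/PM.
(* Since x is not in R, 1 is not in R : x, so some prime contains R : x. *)
have [P [primeP colonP _]] : exists P, [/\ prime_of R P, forall z, colonR R x z -> P z & ~ P 1].
  apply: (@prime_avoiding_powers _ _ HR _ 1 (colon_ideal x)) => n [_].
  by rewrite expr1n mul1r.
have [_ PM] := (crucialM P).1 (in_supp_colon primeP colonP).
by apply/PM; apply: prime_of_pow primeP Rr (colonP _ colon_rk).
Qed.

Lemma uniform_pow_bound r (y : nat -> S) d : R r ->
  (forall i, (i < d)%N -> exists k, R (r ^+ k * y i)) ->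
  exists K, forall i, (i < d)%N -> R (r ^+ K * y i).
Proof.
move=> Rr; elim: d => [|d IHd] bound; first by exists 0%N.
have [K RK] := IHd (fun i lt_id => bound i (leqW lt_id)).
have [k Rk] := bound d (ltnSn d).
exists (K + k)%N => i; rewrite ltnS leq_eqVlt => /orP [/eqP -> | lt_id].
  by rewrite exprD -mulrA; apply: subringM => //; apply: subringX.
by rewrite exprD mulrAC; apply: subringM (RK i lt_id) (subringX _ _ Rr).
Qed.

Lemma adjoinR_self x : adjoinR R x x.
Proof.
exists 2%N, (fun i => if i == 1%N then 1 else 0); split.
  by move=> i; case: eqP => _; [apply: subring1 | apply: subring0].
by rewrite big_ord_recr big_ord1 /= mul0r add0r mul1r expr1.
Qed.

Lemma crucial_rad_conductor M x :
  (forall z, M z -> R z) -> crucial R M -> integral_over R x -> ~ R x ->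
  forall r, M r <-> radR R (conductorR R (adjoinR R x)) r.
Proof.
move=> MR crucialM [d [c [Rc monic_root]]] Rx r; split=> [Mr | [Rr [k [Rrk conductor_rk]]]].
  have Rr := MR r Mr.
  have [K RK] : exists K, forall i, (i < d)%N -> R (r ^+ K * x ^+ i).
    apply: (uniform_pow_bound (y := fun i => x ^+ i) Rr) => i _.
    have [Rxi | Rxi] := classic (R (x ^+ i)); first by exists 0%N; rewrite expr0 mul1r.
    by have [_ [k [_ Rrkx]]] := (crucial_rad_colon crucialM Rxi Rr).1 Mr; exists k.
  split=> //; exists K; split=> [|y /(adjoin_pow_span HR Rc monic_root)]; first exact: subringX.
  exact: mul_pow_span.
apply/(crucial_rad_colon crucialM Rx Rr); split=> //; exists k; split=> //.
exact/conductor_rk/adjoinR_self.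
Qed.

End CrucialExtension.

Lemma list_pigeonhole (A : Type) (l : seq A) (P : nat -> A -> Prop) :
  (forall n, exists2 a, List.In a l & P n a) ->
  exists n m a, [/\ (n < m)%N, P n a & P m a].
Proof.
elim: l P => [|a0 l IHl] P cover; first by have [a []] := cover 0%N.
have [[n [m [lt_nm Pn Pm]]] | no_repeat] :=
  classic (exists n m, [/\ (n < m)%N, P n a0 & P m a0]); first by exists n, m, a0.
have [N a0_late] : exists N, forall k, (N <= k)%N -> ~ P k a0.
  have [[n Pn] | none] := classic (exists n, P n a0).
    by exists n.+1 => k lt_nk Pk; apply: no_repeat; exists n, k.
  by exists 0%N => k _ Pk; apply: none; exists k.
have [|n [m [a [lt_nm Pn Pm]]]] := IHl (fun k => P (N + k)%N).
  move=> k; have [a [a0E | l_a] Pa] := cover (N + k)%N; last by exists a.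
  by case: (a0_late (N + k)%N); rewrite ?leq_addr ?a0E.
by exists (N + n)%N, (N + m)%N, a; rewrite ltn_add2l.
Qed.

Lemma FCP_antitone_stable (S : comNzRingType) (R : S -> Prop) (T : nat -> S -> Prop) :
  FCP R ->
  (forall n, subalgebra R (T n)) ->
  (forall n m, (n <= m)%N -> forall z, T m z -> T n z) ->
  exists n, forall z, T n z -> T n.+1 z.
Proof.
move=> fcp subT antiT.
have chainT : is_chain R (fun X => exists n, X = T n).
  split=> [X [n ->] // | X Y [n ->] [m ->]].
  by have [le_nm | /ltnW le_mn] := leqP n m; [right | left]; apply: antiT.
have [l cover] := fcp _ chainT.
have [|n [m [X [lt_nm TnX TmX]]]] :=
  list_pigeonhole (l := l) (P := fun n X => forall z, T n z <-> X z).
  by move=> n; apply: cover; exists n.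
by exists n => z /TnX /TmX; apply: antiT.
Qed.

Section ShiftedSpan.
Variables (S : comNzRingType) (R : S -> Prop).
Hypothesis HR : is_subring R.
Variables (d : nat) (x : S) (c : nat -> S).
Hypotheses (Rc : forall i, R (c i)) (monic_root : x ^+ d + \sum_(i < d) c i * x ^+ i = 0).
Variable r : S.
Hypothesis Rr : R r.

Definition shifted_span (n : nat) (z : S) : Prop :=
  exists a p, [/\ R a, pow_span R d x p & z = a + r ^+ n * p].

Lemma shifted_span_antitone n m :
  (n <= m)%N -> forall z, shifted_span m z -> shifted_span n z.
Proof.
move=> le_nm _ [a [p [Ra span_p ->]]]; exists a, (r ^+ (m - n) * p); split=> //.
  by apply: (pow_spanZ HR) => //; apply: subringX.
by rewrite mulrA -exprD subnKC.
Qed.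

Lemma subalgebra_shifted_span n : subalgebra R (shifted_span n).
Proof.
have span0 : pow_span R d x 0 by have [] := submodule_pow_span HR d x.
split=> [|a Ra]; last by exists a, 0; rewrite mulr0 addr0.
split; first by exists 1, 0; rewrite mulr0 addr0; split=> //; apply: subring1.
split=> _ _ [a [p [Ra span_p ->]]] [b [q [Rb span_q ->]]].
  exists (a - b), (p - q); split; [exact: subringB | exact: pow_spanB | ring].
exists (a * b), (a * q + b * p + r ^+ n * (p * q)); split; [exact: subringM | | ring].
apply: (pow_spanD HR); first by apply: (pow_spanD HR); apply: (pow_spanZ HR).
by apply: (pow_spanZ HR); [apply: subringX | apply: (pow_spanM HR Rc monic_root)].
Qed.

Lemma shifted_span_stable_unit n :
  (forall z, shifted_span n z -> shifted_span n.+1 z) ->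
  exists2 t, R t & R ((1 - r * t) * (r ^+ n * x)).
Proof.
move=> stable.
have [t Rt Rg] : exists2 t, R t &
    forall i, (i < d)%N -> R ((1 - r * t) * (r ^+ n * x ^+ i)).
  apply: (nakayama_trick HR Rr (g := fun i => r ^+ n * x ^+ i) (submodule_subring HR)).
  move=> i _; have [|a [p [Ra [e [Re ->]] ->]]] := stable (r ^+ n * x ^+ i).
    exists 0, (x ^+ i); split; [exact: subring0 | exact: pow_span_pow | by rewrite add0r].
  exists a, e; do 2!split=> //; congr (_ + _).
  rewrite exprSr -mulrA !mulr_sumr; apply: eq_bigr => j _; ring.
exists t => //; rewrite mulrA; apply: (mul_pow_span HR (d := d)).
  by move=> i lt_id; rewrite -mulrA; apply: Rg.
by rewrite -[x]expr1; exact: (pow_span_pow HR Rc monic_root).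
Qed.

End ShiftedSpan.

Section CriticalIdeal.
Variables (S : comNzRingType) (R : S -> Prop).
Hypothesis HR : is_subring R.
Variables (J : S -> Prop) (x : S).
Hypotheses (criticalJ : critical_ideal R J) (Rx : ~ R x).
Hypotheses (integral_x : integral_over R x) (fcp : FCP R).

Lemma critical_rad_colon y r : ~ R y -> J r <-> radR R (colonR R y) r.
Proof. by move=> Ry; have [_ critJ] := criticalJ; exact: critJ y Ry r. Qed.

Lemma critical_not1 : ~ J 1.
Proof.
move=> /(critical_rad_colon _ Rx) [_ [k [_]]].
by rewrite expr1n mul1r.
Qed.

Lemma critical_inverse_mod r : R r -> ~ J r -> exists2 t, R t & J (1 - r * t).
Proof.
move=> Rr Jr; have [d [c [Rc monic_root]]] := integral_x.
have [n stable] := FCP_antitone_stable fcp (subalgebra_shifted_span HR Rc monic_root Rr)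
  (@shifted_span_antitone _ _ HR _ _ _ Rr).
have [t Rt Rtx] := shifted_span_stable_unit HR Rc monic_root Rr stable.
have Rrx : ~ R (r ^+ n * x).
  move=> Rrx; apply: Jr; apply/(critical_rad_colon _ Rx).
  by split=> //; exists n; split=> //; apply: subringX.
exists t => //; apply/(critical_rad_colon _ Rrx).
have R1rt : R (1 - r * t) by apply: subring_1B_mul.
by split=> //; exists 1%N; rewrite expr1.
Qed.

Lemma critical_maximal : maximal_of R J.
Proof.
have [idealJ _] := criticalJ.
split=> //; split=> [|I [IR subI] JI]; first exact: critical_not1.
have [IJ | not_IJ] := classic (forall z, I z -> J z).
  by right=> z; split=> [/IJ | /JI].
have [a not_IJa] := not_all_ex_not _ _ not_IJ; have [Ia Ja] := imply_to_and _ _ not_IJa.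
have [t Rt Jat] := critical_inverse_mod (IR a Ia) Ja.
by left; apply: submodule_one_of_inverse_mod subI JI Ia Rt Jat.
Qed.

Lemma critical_crucial : crucial R J.
Proof.
move=> P; split=> [[primeP [s s_supp]] | [primeP PJ]]; last first.
  split=> //; exists x => t Rt Pt Rtx; apply: Pt; apply/PJ/(critical_rad_colon _ Rx).
  by split=> //; exists 1%N; rewrite expr1.
split=> // z; have [[PR subP] [P1 _]] := primeP.
have Rs : ~ R s by move=> Rs; apply: (s_supp 1 (subring1 HR) P1); rewrite mul1r.
have JP : forall z, J z -> P z.
  move=> y /(critical_rad_colon _ Rs) [Ry [k [Ryk Rys]]].
  by apply: (prime_of_pow HR (k := k) primeP Ry); apply: NNPP => Pyk; apply: s_supp _ Ryk Pyk Rys.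
split=> [Pz | /JP //]; apply: NNPP => Jz.
have [t Rt Jzt] := critical_inverse_mod (PR z Pz) Jz.
exact/P1/(submodule_one_of_inverse_mod subP JP Pz Rt Jzt).
Qed.

End CriticalIdeal.

Lemma crucial_critical (S : comNzRingType) (R M : S -> Prop) :
  is_subring R -> ideal_of R M -> crucial R M -> critical_ideal R M.
Proof.
move=> HR idealM crucialM; split=> // y Ry r; have [MR _] := idealM.
split=> [Mr | radr]; first exact/(crucial_rad_colon HR crucialM Ry (MR r Mr)).
exact/(crucial_rad_colon HR crucialM Ry radr.1).
Qed.

Theorem proposition6p8 (S : comNzRingType) (R : S -> Prop) :
  is_subring R -> (exists x : S, ~ R x) ->
  integral_ext R -> FCP R ->
  ((exists J, critical_ideal R J) <-> (exists M, maximal_of R M /\ crucial R M)) /\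
  (forall M, maximal_of R M -> crucial R M ->
     critical_ideal R M /\
     forall x, ~ R x -> forall r, M r <-> radR R (conductorR R (adjoinR R x)) r).
Proof.
move=> HR [x Rx] integral fcp.
have crucial_case M : maximal_of R M -> crucial R M -> critical_ideal R M /\
    forall y, ~ R y -> forall r, M r <-> radR R (conductorR R (adjoinR R y)) r.
  move=> [idealM _] crucialM; split; first exact: crucial_critical.
  by move=> y Ry; exact: (crucial_rad_conductor HR idealM.1 crucialM (integral y) Ry).
split=> //; split=> [[J criticalJ] | [M [maxM crucialM]]].
  exists J; split; first exact: (critical_maximal HR criticalJ Rx (integral x) fcp).
  exact: (critical_crucial HR criticalJ Rx (integral x) fcp).
by exists M; have [] := crucial_case M maxM crucialM.
Qed.
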